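(* Let $\tau$ be a signature containing at least two function symbols (constant symbols counted as $0$-ary function symbols), at least one of which has arity $\ge 2$. Then there is a $\Pi^0_2$-sentence $\varphi$ of $\mathcal L_{\omega,\omega}(\tau)$ such that $\vartheta^*(\varphi)$ is not expressible by any sentence of $\mathcal L_{\omega,\omega}(\tau)$.
   Context: Models are nonempty; $\mathfrak B$ is an extension of $\mathfrak A$ if $\mathfrak A$ is a substructure of $\mathfrak B$. $\mathfrak A\vDash\vartheta^*(\varphi)$ iff there is an extension $\mathfrak B$ of $\mathfrak A$ with $\mathfrak B\vDash\varphi$. $\mathcal L_{\omega,\omega}(\tau)$ is ordinary first-order logic with equality. A $\Pi^0_2$-sentence is a prenex sentence $\forall\bar x\,\exists\bar y\,\psi_0$ with $\psi_0$ quantifier-free. A property is expressible by a sentence $\chi$ if for every $\tau$-model $\mathfrak A$, $\mathfrak A$ has the property iff $\mathfrak A\vDash\chi$. *)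

From mathcomp Require Import all_boot.
Set Implicit Arguments.
Unset Strict Implicit.
Unset Printing Implicit Defensive.

Record signature := Signature {
  funs : Type;
  rels : Type;
  farity : funs -> nat;
  rarity : rels -> nat
}.

Section FOL.
Variable tau : signature.

Inductive term : Type :=
| tvar : nat -> term
| tapp : forall f : funs tau, ('I_(farity f) -> term) -> term.

Inductive formula : Type :=
| fbot : formula
| feq  : term -> term -> formula
| frel : forall r : rels tau, ('I_(rarity r) -> term) -> formula
| fnot : formula -> formula
| fand : formula -> formula -> formula
| for_ : formula -> formula -> formula
| fimp : formula -> formula -> formula
| fall : nat -> formula -> formula
| fex  : nat -> formula -> formula.

Fixpoint term_occ (x : nat) (t : term) : Prop :=
  match t with
  | tvar y => x = y
  | tapp f ts => exists i, term_occ x (ts i)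
  end.

Fixpoint free_in (x : nat) (phi : formula) : Prop :=
  match phi with
  | fbot => False
  | feq t1 t2 => term_occ x t1 \/ term_occ x t2
  | frel r ts => exists i, term_occ x (ts i)
  | fnot p => free_in x p
  | fand p q | for_ p q | fimp p q => free_in x p \/ free_in x q
  | fall y p | fex y p => x <> y /\ free_in x p
  end.

Definition sentence (phi : formula) : Prop := forall x, ~ free_in x phi.

Fixpoint quantifier_free (phi : formula) : Prop :=
  match phi with
  | fbot | feq _ _ | frel _ _ => True
  | fnot p => quantifier_free p
  | fand p q | for_ p q | fimp p q => quantifier_free p /\ quantifier_free q
  | fall _ _ | fex _ _ => False
  end.

Definition foralls (xs : seq nat) (phi : formula) : formula :=
  foldr fall phi xs.
Definition existss (ys : seq nat) (phi : formula) : formula :=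
  foldr fex phi ys.

Definition Pi02_sentence (phi : formula) : Prop :=
  sentence phi /\
  exists (xs ys : seq nat) (psi0 : formula),
    quantifier_free psi0 /\ phi = foralls xs (existss ys psi0).

(* tau-structures (models are nonempty). *)
Record structure := Structure {
  dom :> Type;
  dom_wit : dom;
  finterp : forall f : funs tau, ('I_(farity f) -> dom) -> dom;
  rinterp : forall r : rels tau, ('I_(rarity r) -> dom) -> Prop
}.

Fixpoint eval (A : structure) (v : nat -> A) (t : term) : A :=
  match t with
  | tvar x => v x
  | tapp f ts => @finterp A f (fun i => eval v (ts i))
  end.

Definition upd (A : structure) (v : nat -> A) (x : nat) (a : A) : nat -> A :=
  fun y => if y == x then a else v y.

Fixpoint holds (A : structure) (v : nat -> A) (phi : formula) : Prop :=
  match phi with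
  | fbot => False
  | feq t1 t2 => eval v t1 = eval v t2
  | frel r ts => @rinterp A r (fun i => eval v (ts i))
  | fnot p => ~ holds v p
  | fand p q => holds v p /\ holds v q
  | for_ p q => holds v p \/ holds v q
  | fimp p q => holds v p -> holds v q
  | fall x p => forall a : A, holds (upd v x a) p
  | fex x p => exists a : A, holds (upd v x a) p
  end.

(* Satisfaction of a sentence (the assignment is irrelevant for sentences). *)
Definition models (A : structure) (phi : formula) : Prop :=
  holds (fun _ => dom_wit A) phi.

(* B is an extension of A: A is (an isomorphic copy of) a substructure of B,
   i.e. there is an injective embedding A -> B preserving functions and
   (in both directions) relations. *)
Definition extension (A B : structure) : Prop :=
  exists h : A -> B,
    injective h /\
    (forall f (as_ : 'I_(farity f) -> A),
        h (@finterp A f as_) = @finterp B f (fun i => h (as_ i))) /\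
    (forall r (as_ : 'I_(rarity r) -> A),
        @rinterp A r as_ <-> @rinterp B r (fun i => h (as_ i))).

Definition theta_star (phi : formula) (A : structure) : Prop :=
  exists B : structure, extension A B /\ models B phi.

Definition expressible_by (P : structure -> Prop) (chi : formula) : Prop :=
  sentence chi /\ forall A : structure, P A <-> models A chi.

End FOL.

(* Let [F] have arity at least 2 and write [x * y] for [F x y y ...].  The
   sentence [action_sentence] says that right multiplication by the "marked"
   elements (those [t] for which [t * t * t] associates) is a monoid action,
   free on unmarked points, by which [x * x] is reached from [x].  Hence in a
   model of it the iterated squares [x, x * x, ...] of an unmarked [x] never
   return to [x].

   Now interpret [F] as "successor of the first argument" and every other
   symbol as "first argument", so that [x * x] is the successor of [x].  The
   integers extend to a model of the sentence (adjoin the naturals as marked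
   elements acting by translation); [Z + Z/N] does not, because of the cycle.
   Yet in such structures every term is a variable shifted by a constant, and
   a back-and-forth argument, halving the tolerated shift at each quantifier,
   shows that a sentence of shift rank below [N] cannot tell [Z] from
   [Z + Z/N]. *)

From Stdlib Require Import ZArith Lia Classical ClassicalEpsilon FunctionalExtensionality ProofIrrelevance.
From Pilot Require Import Defs.
From mathcomp Require Import all_boot zify.
Set Implicit Arguments.
Unset Strict Implicit.
Unset Printing Implicit Defensive.

Local Open Scope Z_scope.

Definition nth_arg (X : Type) n (args : 'I_n -> X) (k : nat) (d : X) : X :=
  if insub k is Some i then args i else d.

Lemma nth_arg_ord X n (args : 'I_n -> X) (i : 'I_n) d : nth_arg args i d = args i.
Proof. by rewrite /nth_arg valK. Qed.

Lemma nth_arg_map X Y n (args : 'I_n -> X) (g : X -> Y) k d :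
  nth_arg (fun i => g (args i)) k (g d) = g (nth_arg args k d).
Proof. by rewrite /nth_arg; case: insub. Qed.

Record shift_model := ShiftModel {
  carrier :> Type;
  origin : carrier;
  shift : carrier -> Z -> carrier;
  shift0 : forall a, shift a 0 = a;
  shiftD : forall a d e, shift (shift a d) e = shift a (d + e);
  shift_avoid : forall (l : list carrier) (T : Z),
    exists b, forall a, List.In a l -> forall d, Z.abs d <= T -> shift a d <> b
}.

Definition no_period_upto (M : shift_model) (B : Z) : Prop :=
  forall (a : M) d, Z.abs d <= B -> shift a d = a -> d = 0.

Section ShiftModelTheory.
Variable M : shift_model.

Lemma shiftK (a : M) d : shift (shift a d) (- d) = a.
Proof. by rewrite shiftD Z.add_opp_diag_r shift0. Qed.

Lemma shift_eqLR (a b : M) d : shift a d = b <-> a = shift b (- d).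
Proof. by split=> [<-|->]; rewrite ?shiftK // -{2}(Z.opp_involutive d) shiftK. Qed.

Lemma shift_eq_shift (a b : M) d e : shift a d = shift b e <-> shift a (d - e) = b.
Proof.
rewrite -Z.add_opp_r -shiftD; split=> [->|<-]; first exact: shiftK.
by rewrite shiftD Z.add_opp_diag_l shift0.
Qed.

Lemma shift_eq_self B (free : no_period_upto M B) (a : M) d :
  Z.abs d <= B -> shift a d = a <-> d = 0.
Proof. by move=> Hd; split=> [/free|->]; rewrite ?shift0 //; apply. Qed.

End ShiftModelTheory.

Section ShiftStructure.
Variables (tau : signature) (F : funs tau).

Definition is_F (f : funs tau) : bool :=
  if excluded_middle_informative (f = F) then true else false.

Lemma is_FF : is_F F.
Proof. by rewrite /is_F; case: excluded_middle_informative. Qed.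

Fixpoint spine_var (t : term tau) : option nat :=
  match t with
  | tvar x => Some x
  | tapp f ts => if insub 0%N : option 'I_(farity f) is Some i then spine_var (ts i) else None
  end.

Fixpoint spine_len (t : term tau) : Z :=
  match t with
  | tvar _ => 0
  | tapp f ts =>
      (if insub 0%N : option 'I_(farity f) is Some i then spine_len (ts i) else 0)
      + (if is_F f then 1 else 0)
  end.

Lemma spine_len_ge0 t : 0 <= spine_len t.
Proof.
elim: t => [x|f ts IH] /=; first lia.
by case: insub => [i|]; [have := IH i|]; case: is_F; lia.
Qed.

Definition shift_structure (M : shift_model) : structure tau :=
  @Structure tau M (origin M)
    (fun f args => let a := nth_arg args 0 (origin M) in if is_F f then shift a 1 else a)
    (fun _ _ => False).

Definition val_at (M : shift_model) (v : nat -> M) (o : option nat) : M :=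
  if o is Some x then v x else origin M.

Lemma eval_shift_structure (M : shift_model) (v : nat -> M) t :
  @eval tau (shift_structure M) v t = shift (val_at v (spine_var t)) (spine_len t).
Proof.
elim: t => [x|f ts IH] /=; first by rewrite shift0.
rewrite /nth_arg; case: insub => [i|] /=.
  by rewrite IH; case: is_F; rewrite ?shiftD ?Z.add_0_r.
by case: is_F; rewrite ?shift0.
Qed.

End ShiftStructure.

(* [upd] of [Defs] for carriers of shift models, which are not structures. *)
Definition upd_fun (X : Type) (v : nat -> X) (x : nat) (a : X) : nat -> X :=
  fun y => if y == x then a else v y.

Lemma val_at_upd (M : shift_model) (v : nat -> M) x a o :
  val_at (upd_fun v x a) o = if o == Some x then a else val_at v o.
Proof. by case: o => [y|] //=; rewrite /upd_fun; case: eqP => [->|]; case: eqP => // [[]]. Qed.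

Definition in_sites (S : seq nat) (o : option nat) : Prop :=
  if o is Some y then List.In y S else True.

Definition shift_equiv (M1 M2 : shift_model) (S : seq nat) (T : Z)
    (v : nat -> M1) (w : nat -> M2) : Prop :=
  forall o1 o2, in_sites S o1 -> in_sites S o2 -> forall d, Z.abs d <= T ->
    shift (val_at v o1) d = val_at v o2 <-> shift (val_at w o1) d = val_at w o2.

Section BackAndForth.
Variables (M1 M2 : shift_model) (S : seq nat).

Lemma shift_equiv_le T T' v w :
  T' <= T -> @shift_equiv M1 M2 S T v w -> shift_equiv S T' v w.
Proof. by move=> le_T' equiv o1 o2 H1 H2 d Hd; apply: equiv => //; lia. Qed.

Lemma shift_equiv_sym T v w : @shift_equiv M1 M2 S T v w -> shift_equiv S T w v.
Proof. by move=> equiv o1 o2 H1 H2 d Hd; symmetry; apply: equiv. Qed.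

(* Forth step: an element within distance [T] of a site is matched by the same
   shift of the corresponding site; a far element by a far element. *)
Lemma shift_equiv_forth B T x v w (a : M1) :
  no_period_upto M1 B -> no_period_upto M2 B -> 0 <= T <= B ->
  shift_equiv S (2 * T) v w ->
  exists b : M2, shift_equiv S T (upd_fun v x a) (upd_fun w x b).
Proof.
move=> free1 free2 T_B equiv.
have same_site d (a' : M1) (b : M2) : Z.abs d <= T -> shift a' d = a' <-> shift b d = b.
  by move=> Hd; rewrite (shift_eq_self free1) ?(shift_eq_self free2) //; lia.
case: (classic (exists o d0, [/\ in_sites S o, o <> Some x, Z.abs d0 <= T
                                & a = shift (val_at v o) d0])).
- move=> [o [d0 [So o_x Hd0 ->]]].
  exists (shift (val_at w o) d0) => o1 o2 S1 S2 d Hd; rewrite !val_at_upd.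
  case: eqP => [_|/eqP o1_x]; case: eqP => [_|/eqP o2_x].
  + exact: same_site.
  + by rewrite !shiftD; apply: equiv => //; lia.
  + by rewrite !shift_eq_shift; apply: equiv => //; lia.
  + by apply: equiv => //; lia.
- move=> far_a.
  have [b far_b] := shift_avoid (origin M2 :: map w S) T.
  have far_b' o d : in_sites S o -> Z.abs d <= T -> shift (val_at w o) d <> b.
    by case: o => [y|] Sy Hd /=; apply: far_b => //=; [right; apply: List.in_map | left].
  exists b => o1 o2 S1 S2 d Hd; rewrite !val_at_upd.
  case: eqP => [_|/eqP o1_x]; case: eqP => [_|/eqP o2_x].
  + exact: same_site.
  + rewrite !shift_eqLR; split=> E; exfalso.
    * by apply: far_a; exists o2, (- d); split => //; [apply/eqP | lia].
    * by apply: (far_b' o2 (- d)) => //; lia.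
  + split=> E; exfalso.
    * by apply: far_a; exists o1, d; split => //; apply/eqP.
    * exact: (far_b' o1 d).
  + by apply: equiv => //; lia.
Qed.

End BackAndForth.

Lemma shift_equiv_back (M1 M2 : shift_model) S B T x v w (b : M2) :
  no_period_upto M1 B -> no_period_upto M2 B -> 0 <= T <= B ->
  @shift_equiv M1 M2 S (2 * T) v w ->
  exists a : M1, shift_equiv S T (upd_fun v x a) (upd_fun w x b).
Proof.
move=> free1 free2 T_B /shift_equiv_sym equiv.
have [a equiv'] := shift_equiv_forth x b free2 free1 T_B equiv.
by exists a; apply: shift_equiv_sym.
Qed.

Section Indistinguishability.
Variables (tau : signature) (F : funs tau).

(* A quantifier of the formula may have to match a new element within distance
   [T] of an old one, hence the doubling. *)
Fixpoint shift_rank (p : formula tau) : Z :=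
  match p with
  | feq t1 t2 => spine_len F t1 + spine_len F t2
  | fnot p => shift_rank p
  | fand p q | for_ p q | fimp p q => Z.max (shift_rank p) (shift_rank q)
  | fall _ p | fex _ p => 2 * shift_rank p
  | fbot | Defs.frel _ _ => 0
  end.

Lemma shift_rank_ge0 p : 0 <= shift_rank p.
Proof.
elim: p => [|t1 t2|r ts|p IH|p IHp q IHq|p IHp q IHq|p IHp q IHq|x p IH|x p IH];
  cbn [shift_rank]; try have := @spine_len_ge0 _ F t1; try have := @spine_len_ge0 _ F t2; lia.
Qed.

Definition seq_of_option (o : option nat) : seq nat := if o is Some x then [:: x] else [::].

Fixpoint spine_vars (p : formula tau) : seq nat :=
  match p with
  | feq t1 t2 => seq_of_option (spine_var t1) ++ seq_of_option (spine_var t2)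
  | fnot p | fall _ p | fex _ p => spine_vars p
  | fand p q | for_ p q | fimp p q => spine_vars p ++ spine_vars q
  | fbot | Defs.frel _ _ => [::]
  end.

Lemma in_sites_incl S o : List.incl (seq_of_option o) S -> in_sites S o.
Proof. by case: o => //= y; apply; left. Qed.

Lemma shift_structure_holds_iff (M1 M2 : shift_model) B S p v w :
  no_period_upto M1 B -> no_period_upto M2 B ->
  shift_rank p <= B -> List.incl (spine_vars p) S ->
  shift_equiv S (shift_rank p) v w ->
  holds (A := shift_structure F M1) v p <-> holds (A := shift_structure F M2) w p.
Proof.
move=> free1 free2.
elim: p v w => [|t1 t2|r ts|p IH|p IHp q IHq|p IHp q IHq|p IHp q IHq|x p IH|x p IH] v w;
  cbn [shift_rank spine_vars holds] => rank_B sites equiv; try done.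
3-5: have [sites_p sites_q] := List.incl_app_inv _ _ sites;
  by rewrite (IHp v w) ?(IHq v w) //; try lia; apply: shift_equiv_le equiv; lia.
- rewrite !eval_shift_structure !shift_eq_shift.
  have := @spine_len_ge0 _ F t1; have := @spine_len_ge0 _ F t2 => ge0_1 ge0_2.
  apply: equiv; try apply: in_sites_incl; try lia.
  + by move=> y y1; apply: sites; apply: List.in_or_app; left.
  + by move=> y y2; apply: sites; apply: List.in_or_app; right.
- by rewrite (IH v w).
- have rank_p : 0 <= shift_rank p <= B by have := shift_rank_ge0 (p := p); lia.
  split=> H.
  + move=> b; have [a equiv_ab] := shift_equiv_back x b free1 free2 rank_p equiv.
    by rewrite -(IH _ _ _ _ equiv_ab) //; [apply: H | lia].
  + move=> a; have [b equiv_ab] := shift_equiv_forth x a free1 free2 rank_p equiv.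
    by rewrite (IH _ _ _ _ equiv_ab) //; [apply: H | lia].
- have rank_p : 0 <= shift_rank p <= B by have := shift_rank_ge0 (p := p); lia.
  split=> [[a H]|[b H]].
  + have [b equiv_ab] := shift_equiv_forth x a free1 free2 rank_p equiv.
    by exists b; rewrite -(IH _ _ _ _ equiv_ab) //; lia.
  + have [a equiv_ab] := shift_equiv_back x b free1 free2 rank_p equiv.
    by exists a; rewrite (IH _ _ _ _ equiv_ab) //; lia.
Qed.

End Indistinguishability.

Lemma fold_max_ge (l : list Z) q : List.In q l -> q <= List.fold_right Z.max 0 l.
Proof. by elim: l => //= a l IH [->|/IH]; lia. Qed.

Definition int_model : shift_model.
Proof.
refine (@ShiftModel Z 0 Z.add _ _ _) => [a|a d e|l T]; try lia.
exists (List.fold_right Z.max 0 l + T + 1) => a /fold_max_ge; lia.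
Defined.

Lemma int_model_no_period B : no_period_upto int_model B.
Proof. by move=> a d _ /=; lia. Qed.

Section Cycle.
Variable N : positive.

Definition cyc := {k : Z | 0 <= k < Z.pos N}.

Definition cyc_of (k : Z) : cyc :=
  exist _ (k mod Z.pos N) (Z.mod_pos_bound k (Z.pos N) (Pos2Z.is_pos N)).

Lemma cyc_inj (a b : cyc) : proj1_sig a = proj1_sig b -> a = b.
Proof. by case: a b => [a Ha] [b Hb] /= E; subst; f_equal; apply: proof_irrelevance. Qed.

Definition cycle_shift (a : Z + cyc) (d : Z) : Z + cyc :=
  match a with inl x => inl (x + d) | inr k => inr (cyc_of (proj1_sig k + d)) end.

(* The integers beside the cycle keep finitely many points from covering the
   model. *)
Definition cycle_model : shift_model.
Proof.
refine (@ShiftModel (Z + cyc)%type (inl 0) cycle_shift _ _ _).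
- case=> [a|[k Hk]] /=; first by rewrite Z.add_0_r.
  by congr inr; apply: cyc_inj; rewrite /= Z.add_0_r Z.mod_small.
- case=> [a|[k Hk]] d e /=; first by rewrite Z.add_assoc.
  by congr inr; apply: cyc_inj; rewrite /= Zplus_mod_idemp_l Z.add_assoc.
- move=> l T; pose int_part (a : Z + cyc) := if a is inl x then x else 0.
  exists (inl (List.fold_right Z.max 0 (List.map int_part l) + T + 1)).
  move=> [x|k] /(List.in_map int_part) /fold_max_ge /= Hx d Hd //= [E]; lia.
Defined.

Lemma cycle_model_no_period : no_period_upto cycle_model (Z.pos N - 1).
Proof.
case=> [a|[k Hk]] d Hd /= [E]; first lia.
have [q Edq] : exists q, d = Z.pos N * q.
  by exists ((k + d) / Z.pos N); have := Z_div_mod_eq_full (k + d) (Z.pos N); lia.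
move: Hd; rewrite {}Edq Z.abs_mul [Z.abs (Z.pos N)]/= => Hd.
have [q_lt1|q_ge1] := Z.lt_ge_cases (Z.abs q) 1; first lia.
have := Z.mul_le_mono_nonneg_l 1 (Z.abs q) (Z.pos N) ltac:(lia) q_ge1; lia.
Qed.

Lemma cycle_model_period (k : cyc) : @shift cycle_model (inr k) (Z.pos N) = inr k.
Proof.
case: k => [k Hk]; congr inr; apply: cyc_inj => /=.
by rewrite -Zplus_mod_idemp_r Z_mod_same_full Z.add_0_r Z.mod_small.
Qed.

End Cycle.

Section ActionSentence.
Local Open Scope nat_scope.
Variables (tau : signature) (F : funs tau).

Definition bin (t1 t2 : term tau) : term tau :=
  @tapp tau F (fun i => if nat_of_ord i == 0%N then t1 else t2).

Definition bin_op (A : structure tau) (x y : A) : A :=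
  @finterp tau A F (fun i => if nat_of_ord i == 0%N then x else y).

Lemma eval_bin (A : structure tau) (v : nat -> A) t1 t2 :
  eval v (bin t1 t2) = bin_op (eval v t1) (eval v t2).
Proof. by rewrite /= /bin_op; congr finterp; apply: functional_extensionality => i; case: eqP. Qed.

Lemma term_occ_bin y t1 t2 : term_occ y (bin t1 t2) -> term_occ y t1 \/ term_occ y t2.
Proof. by case=> i /=; case: eqP; tauto. Qed.

Definition marked_term (t : term tau) : formula tau :=
  feq (bin (bin t t) t) (bin t (bin t t)).

Definition marked (A : structure tau) (t : A) : Prop :=
  bin_op (bin_op t t) t = bin_op t (bin_op t t).

Definition action_matrix : formula tau :=
  let x := tvar tau 0 in let z := tvar tau 1 in let w := tvar tau 2 in let u := tvar tau 3 in
  fand (fand (marked_term u) (feq (bin x u) (bin x x)))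
       (fand (fimp (fand (marked_term z) (marked_term w))
                   (fand (feq (bin (bin x z) w) (bin x (bin z w))) (marked_term (bin z w))))
             (fimp (fand (marked_term z) (fnot (marked_term x))) (fnot (feq (bin x z) x)))).

Definition action_sentence : formula tau :=
  foralls [:: 0%N; 1%N; 2%N] (existss [:: 3%N] action_matrix).

Definition action_axiom (A : structure tau) (x z w u : A) : Prop :=
  (marked u /\ bin_op x u = bin_op x x) /\
  ((marked z /\ marked w -> bin_op (bin_op x z) w = bin_op x (bin_op z w) /\ marked (bin_op z w)) /\
   (marked z /\ ~ marked x -> bin_op x z <> x)).

Lemma holds_action_matrix (A : structure tau) (v : nat -> A) :
  holds v action_matrix <-> action_axiom (v 0) (v 1) (v 2) (v 3).
Proof. by rewrite /action_matrix /marked_term; cbn [holds]; rewrite !eval_bin. Qed.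

Lemma models_action_sentence (A : structure tau) :
  models A action_sentence <-> forall x z w : A, exists u, action_axiom x z w u.
Proof.
rewrite /models /action_sentence; cbn [foralls existss foldr holds].
by split=> H x z w; have [u Hu] := H x z w; exists u; move: Hu; rewrite holds_action_matrix.
Qed.

Lemma free_in_action_matrix y : free_in y action_matrix -> y <= 3.
Proof.
have bin_le t1 t2 : (term_occ y t1 -> y <= 3) -> (term_occ y t2 -> y <= 3) ->
    term_occ y (bin t1 t2) -> y <= 3.
  by move=> le1 le2 /term_occ_bin [].
have var_le k : k <= 3 -> term_occ y (tvar tau k) -> y <= 3 by move=> Hk /= ->.
rewrite /action_matrix /marked_term; cbn [free_in] => H.
decompose [or and] H; clear H;
match goal with h : term_occ _ _ |- _ => move: h end;
by repeat first [apply: (bin_le) | apply: (var_le)].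
Qed.

Lemma Pi02_action_sentence : Pi02_sentence action_sentence.
Proof.
split; last by exists [:: 0; 1; 2], [:: 3], action_matrix.
rewrite /action_sentence => y; cbn [foralls existss foldr free_in].
by move=> [? [? [? [? /free_in_action_matrix]]]]; lia.
Qed.
End ActionSentence.

Lemma models_shift_structure_iff tau (F : funs tau) (M1 M2 : shift_model) B p :
  no_period_upto M1 B -> no_period_upto M2 B -> shift_rank F p <= B ->
  models (shift_structure F M1) p <-> models (shift_structure F M2) p.
Proof.
move=> free1 free2 rank_B.
apply: (shift_structure_holds_iff free1 free2 rank_B (List.incl_refl _)).
have rank_ge0 := shift_rank_ge0 (F := F) (p := p).
move=> o1 o2 _ _ d Hd; case: o1 o2 => [?|] [?|] /=;
  by rewrite (shift_eq_self free1) ?(shift_eq_self free2) //; lia.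
Qed.

Section IntAndCycle.
Variables (tau : signature) (F : funs tau).

Definition int_structure := shift_structure F int_model.

Definition cycle_structure (N : positive) := shift_structure F (cycle_model N).

Lemma models_int_cycle (N : positive) p :
  shift_rank F p < Z.pos N ->
  models int_structure p <-> models (cycle_structure N) p.
Proof.
move=> rank_N; apply: (models_shift_structure_iff (B := Z.pos N - 1)); try lia.
- exact: int_model_no_period.
- exact: cycle_model_no_period.
Qed.

End IntAndCycle.

Section ActionModels.
Variables (tau : signature) (F : funs tau).
Hypothesis F_binary : (2 <= farity F)%N.

Lemma bin_op_shift_structure (M : shift_model) (x y : shift_structure F M) :
  bin_op F x y = shift x 1.
Proof. by rewrite /bin_op /= is_FF (nth_arg_ord _ (Ordinal (ltnW F_binary))). Qed.

Section ModelsOfAction.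
Variables (A : structure tau) (A_action : models A (action_sentence F)).

Lemma action_reaches_squares (s : nat -> A) :
  (forall k, s k.+1 = bin_op F (s k) (s k)) ->
  forall n, exists z, marked F z /\ bin_op F (s 0%N) z = s n.+1.
Proof.
move/models_action_sentence: A_action => axiom s_sq.
elim=> [|n [z [z_marked Ez]]].
  have [u [[u_marked Eu] _]] := axiom (s 0%N) (s 0%N) (s 0%N).
  by exists u; split; rewrite // Eu -s_sq.
have [u [[u_marked Eu] _]] := axiom (s n.+1) z z.
have [u' [_ [assoc _]]] := axiom (s 0%N) z u.
have [E1 zu_marked] := assoc (conj z_marked u_marked).
by exists (bin_op F z u); split; rewrite // -E1 Ez Eu -s_sq.
Qed.

Lemma action_no_square_cycle (s : nat -> A) n :
  (forall k, s k.+1 = bin_op F (s k) (s k)) -> ~ marked F (s 0%N) -> s n.+1 <> s 0%N.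
Proof.
move=> s_sq s0_unmarked E.
have [z [z_marked Ez]] := action_reaches_squares s_sq n.
move/models_action_sentence: A_action => /(_ (s 0%N) z z) [u [_ [_ free]]].
by apply: (free (conj z_marked s0_unmarked)); rewrite Ez.
Qed.

End ModelsOfAction.

Definition ext_op (x y : Z + nat) : Z + nat :=
  match x, y with
  | inl a, inl _ => inl (a + 1)
  | inl a, inr n => inl (a + Z.of_nat n + 1)
  | inr n, inr m => inr (n + m + 1)%N
  | inr n, inl _ => inr n
  end.

Definition ext_structure : structure tau :=
  @Structure tau (Z + nat)%type (inl 0)
    (fun f args => let a := nth_arg args 0 (inl 0) in
                   if is_F F f then ext_op a (nth_arg args 1 (inl 0)) else a)
    (fun _ _ => False).

Lemma bin_op_ext (x y : ext_structure) : bin_op F x y = ext_op x y.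
Proof.
by rewrite /bin_op /= is_FF (nth_arg_ord _ (Ordinal (ltnW F_binary))) (nth_arg_ord _ (Ordinal F_binary)).
Qed.

Lemma marked_ext (t : ext_structure) : marked F t <-> exists n, t = inr n.
Proof.
rewrite /marked !bin_op_ext; case: t => [a|n] /=; split.
- by case; lia.
- by case.
- by exists n.
- by move=> _; congr inr; lia.
Qed.

Lemma int_structure_extendable : theta_star (action_sentence F) (int_structure F).
Proof.
exists ext_structure; split.
- exists inl; split; first by move=> a b [].
  split=> // f args /=.
  by case: is_F; rewrite !(nth_arg_map args (@inl Z nat)).
- apply/(models_action_sentence F) => x z w.
  exists (if x is inr n then inr n else inr 0%N).
  rewrite /action_axiom !marked_ext !bin_op_ext.
  split; [split|split].
  + by case: x => [a|n]; eexists.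
  + by case: x => [a|n] //=; congr inl; lia.
  + case=> [[n ->] [m ->]]; split; last by eexists.
    by case: x => [a|k] /=; [congr inl | congr inr]; lia.
  + case=> [[n ->] x_unmarked]; case: x x_unmarked => [a|k] x_unmarked /=.
    * by case; lia.
    * by exfalso; apply: x_unmarked; eexists.
Qed.

Lemma embedding_bin_op (A B : structure tau) (h : A -> B) :
  (forall f (args : 'I_(farity f) -> A),
      h (@finterp tau A f args) = @finterp tau B f (fun i => h (args i))) ->
  forall x y, h (bin_op F x y) = bin_op F (h x) (h y).
Proof.
move=> h_hom x y; rewrite /bin_op h_hom; congr finterp.
by apply: functional_extensionality => i; case: eqP.
Qed.

Lemma cycle_structure_not_extendable (N : positive) :
  1 < Z.pos N -> ~ theta_star (action_sentence F) (cycle_structure F N).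
Proof.
move=> N_gt1 [B [[h [h_inj [h_hom _]]] B_action]].
have h_bin := embedding_bin_op h_hom.
pose c : cycle_structure F N := inr (cyc_of N 0).
pose s k := h (shift c (Z.of_nat k)).
have s_sq k : s k.+1 = bin_op F (s k) (s k).
  by rewrite -h_bin bin_op_shift_structure /s shiftD Nat2Z.inj_succ.
apply: (action_no_square_cycle B_action s_sq (n := (Pos.to_nat N).-1)).
- rewrite /s shift0 /marked -!h_bin => /h_inj.
  rewrite !bin_op_shift_structure !shiftD shift_eq_shift.
  by rewrite (shift_eq_self (@cycle_model_no_period N)); lia.
- rewrite prednK; last by have := Pos2Nat.is_pos N => /ltP.
  by rewrite /s positive_nat_Z shift0 /c cycle_model_period.
Qed.

End ActionModels.

Local Close Scope Z_scope.

Theorem theorem6 (tau : signature) :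
  (exists f g : funs tau, f <> g) ->
  (exists f : funs tau, 2 <= farity f) ->
  exists phi : formula tau,
    Pi02_sentence phi /\
    ~ (exists chi : formula tau, expressible_by (theta_star phi) chi).
Proof.
move=> _ [F F_binary]; exists (action_sentence F).
split; first exact: Pi02_action_sentence.
move=> [chi [_ expresses]].
have rank_ge0 := shift_rank_ge0 (F := F) (p := chi).
pose N := Z.to_pos (shift_rank F chi + 2)%Z.
have N_def : (Z.pos N = shift_rank F chi + 2)%Z by rewrite /N Z2Pos.id //; lia.
apply: (cycle_structure_not_extendable F_binary (N := N)); first lia.
apply/expresses; rewrite -models_int_cycle; last lia.
by apply/expresses; apply: int_structure_extendable.
Qed.
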